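(* Let $v\equiv 1$ or $7\pmod{24}$ with $v\ge 7$, and let $n=\frac{v-1}{6}$. For all integers $i,j$ with $0\le j\le n$ and $j\le i\le n$, there exists a cyclic four-fold triple system CTS$(v,4)$ whose fine structure $(c_1,c_2,c_3,c_4)$ satisfies $(c_2,c_3,c_4)=(2n-2i,\,i-j,\,j)$.
   Context: A cyclic $\lambda$-fold triple system CTS$(v,\lambda)$ is a multiset $\mathcal B$ of 3-element subsets (blocks) of $\mathbb Z_v$ such that every 2-element subset of $\mathbb Z_v$ is contained in exactly $\lambda$ blocks (counted with multiplicity), and $\mathcal B$ is invariant under the translation $x\mapsto x+1$. Thus $\mathcal B$ is a union of translation orbits of 3-subsets with multiplicities; a base block is an orbit representative. The fine structure is $(c_1,\ldots,c_\lambda)$, where $c_i$ is the number of distinct base blocks (orbits) occurring with multiplicity exactly $i$; for $\lambda=4$, $c_1=4n-4c_4-3c_3-2c_2$. *)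

From mathcomp Require Import all_boot all_order all_algebra.
Set Implicit Arguments. Unset Strict Implicit. Unset Printing Implicit Defensive.
Import GRing.Theory.
Local Open Scope ring_scope.

(* A multiset of subsets of Z_v is represented by its multiplicity function
   m : {set 'Z_v} -> nat.  (Only used for v >= 2, where 'Z_v is Z/vZ.) *)

Definition translate (v : nat) (k : 'Z_v) (B : {set 'Z_v}) : {set 'Z_v} :=
  [set x + k | x in B].

Definition orbitZ (v : nat) (B : {set 'Z_v}) : {set {set 'Z_v}} :=
  [set translate k B | k : 'Z_v].

Definition isCTS (v lam : nat) (m : {set 'Z_v} -> nat) : Prop :=
  [/\ (forall B : {set 'Z_v}, (0 < m B)%N -> #|B| = 3%N),
      (forall B : {set 'Z_v}, m (translate 1 B) = m B) &
      (forall x y : 'Z_v, x != y ->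
         (\sum_(B : {set 'Z_v} | (x \in B) && (y \in B)) m B)%N = lam)].

Definition fine_c (v : nat) (m : {set 'Z_v} -> nat) (i : nat) : nat :=
  #|[set orbitZ B | B in [set B : {set 'Z_v} | m B == i]]|.

(* Write v = 6n + 1; then n = 0 or 1 (mod 4), so a Skolem sequence of order n
   exists, and it turns into triples {a_k, b_k, a_k + b_k} partitioning
   {1, ..., 3n}.  The blocks B_k = {0, a_k, a_k + b_k} then form a difference
   family in Z_v: every nonzero residue is a difference inside exactly one B_k.
   The negated blocks -B_k have the same differences, and since the B_k are
   Sidon sets of size 3, all the translates of the B_k and -B_k are distinct.
   Developing B_k with multiplicity w_k and -B_k with multiplicity 4 - w_k
   thus gives a CTS(v, 4) in which the orbit of B_k contributes to c_{w_k}
   and that of -B_k to c_{4 - w_k}; taking w_k = 4, 3, 2 according as k < j,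
   j <= k < i or i <= k gives (c_2, c_3, c_4) = (2n - 2i, i - j, j). *)

From mathcomp Require Import all_boot all_order all_algebra.
From mathcomp Require Import zify ring.
Set Implicit Arguments. Unset Strict Implicit. Unset Printing Implicit Defensive.
Import GRing.Theory.

Definition skolem_seq (n : nat) (P : seq (nat * nat)) : Prop :=
  perm_eq [seq x.2 - x.1 | x <- P] (iota 1 n) /\
  perm_eq (flatten [seq [:: x.1; x.2] | x <- P]) (iota 1 (2 * n)).

Definition skolem_triples (n : nat) (T : seq (nat * nat)) : Prop :=
  perm_eq (flatten [seq [:: x.1; x.2; x.1 + x.2] | x <- T]) (iota 1 (3 * n)).

Lemma perm_iota_cover (s : seq nat) a N :
  size s = N -> (forall x, a <= x < a + N -> x \in s) -> perm_eq s (iota a N).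
Proof.
move=> sizes cover.
have sub : {subset iota a N <= s} by move=> x; rewrite mem_iota; apply: cover.
have [|eqsize eqmem] := uniq_min_size (iota_uniq a N) sub.
  by rewrite size_iota sizes.
apply: uniq_perm; last by move=> x; rewrite eqmem.
  by rewrite (uniq_size_uniq (iota_uniq a N) eqmem) eqsize.
exact: iota_uniq.
Qed.

Lemma skolem_seq_cover n P : size P = n ->
  (forall d, 0 < d <= n -> has (fun x => x.2 - x.1 == d) P) ->
  (forall a, 0 < a <= 2 * n -> has (fun x => (x.1 == a) || (x.2 == a)) P) ->
  skolem_seq n P.
Proof.
move=> sizeP diffs points; split; apply: perm_iota_cover.
- by rewrite size_map.
- move=> d /diffs /hasP[x xP /eqP <-]; exact: map_f.
- by rewrite -sizeP; elim: P {diffs points sizeP} => //= x P ->; lia.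
- move=> a /points /hasP[x xP ax]; apply/flatten_mapP; exists x => //.
  by rewrite !inE !(eq_sym a).
Qed.

(* Skolem's sequences of orders 4s and 4s + 1, valid for s >= 2. *)
Definition skolem_pairs0 s : seq (nat * nat) :=
  [seq (4 * s + r - 1, 8 * s - r + 1) | r <- iota 1 (2 * s)] ++
  [seq (r, 4 * s - r - 1) | r <- iota 1 (s - 1)] ++
  [seq (s + r + 1, 3 * s - r) | r <- iota 1 (s - 2)] ++
  [:: (s, s + 1); (2 * s + 1, 6 * s); (2 * s, 4 * s - 1)].

Definition skolem_pairs1 s : seq (nat * nat) :=
  [seq (4 * s + r + 1, 8 * s - r + 3) | r <- iota 1 (2 * s)] ++
  [seq (r, 4 * s + 1 - r) | r <- iota 1 s] ++
  [seq (s + 2 + r, 3 * s + 1 - r) | r <- iota 1 (s - 2)] ++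
  [:: (2 * s + 1, 6 * s + 2); (s + 1, s + 2); (2 * s + 2, 4 * s + 1)].

(* The pair with parameter [r] in the [k]-th progression (counting from 0). *)
Tactic Notation "pair_in_progression" int_or_var(k) constr(r) :=
  rewrite !has_cat; do k (apply/orP; right); apply/orP; left;
  rewrite has_map; apply/hasP; exists r; rewrite ?mem_iota /=; lia.

Ltac fixed_pair := rewrite !has_cat /=; lia.

Lemma skolem_seq_pairs0 s : 2 <= s -> skolem_seq (4 * s) (skolem_pairs0 s).
Proof.
move=> s2; apply: skolem_seq_cover.
- by rewrite !size_cat !size_map !size_iota /=; lia.
- move=> d d_range; have [m [dE|dE]] : exists m, d = 2 * m \/ d = 2 * m + 1.
    by exists (d %/ 2); lia.
    by pair_in_progression 0 (2 * s + 1 - m).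
  have [?|?] := leqP m 0; first by fixed_pair.
  have [?|?] := leqP m (s - 2); first by pair_in_progression 2 (s - 1 - m).
  have [?|?] := leqP m (s - 1); first by fixed_pair.
  have [?|?] := leqP m (2 * s - 2); first by pair_in_progression 1 (2 * s - 1 - m).
  by fixed_pair.
- move=> a a_range.
  have [?|?] := leqP a (s - 1); first by pair_in_progression 1 a.
  have [?|?] := leqP a (s + 1); first by fixed_pair.
  have [?|?] := leqP a (2 * s - 1); first by pair_in_progression 2 (a - s - 1).
  have [?|?] := leqP a (2 * s + 1); first by fixed_pair.
  have [?|?] := leqP a (3 * s - 1); first by pair_in_progression 2 (3 * s - a).
  have [?|?] := leqP a (4 * s - 2); first by pair_in_progression 1 (4 * s - 1 - a).
  have [?|?] := leqP a (4 * s - 1); first by fixed_pair.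
  have [?|?] := leqP a (6 * s - 1); first by pair_in_progression 0 (a - 4 * s + 1).
  have [?|?] := leqP a (6 * s); first by fixed_pair.
  by pair_in_progression 0 (8 * s + 1 - a).
Qed.

Lemma skolem_seq_pairs1 s : 2 <= s -> skolem_seq (4 * s + 1) (skolem_pairs1 s).
Proof.
move=> s2; apply: skolem_seq_cover.
- by rewrite !size_cat !size_map !size_iota /=; lia.
- move=> d d_range; have [m [dE|dE]] : exists m, d = 2 * m \/ d = 2 * m + 1.
    by exists (d %/ 2); lia.
    by pair_in_progression 0 (2 * s + 1 - m).
  have [?|?] := leqP m 0; first by fixed_pair.
  have [?|?] := leqP m (s - 2); first by pair_in_progression 2 (s - 1 - m).
  have [?|?] := leqP m (s - 1); first by fixed_pair.
  have [?|?] := leqP m (2 * s - 1); first by pair_in_progression 1 (2 * s - m).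
  by fixed_pair.
- move=> a a_range.
  have [?|?] := leqP a s; first by pair_in_progression 1 a.
  have [?|?] := leqP a (s + 2); first by fixed_pair.
  have [?|?] := leqP a (2 * s); first by pair_in_progression 2 (a - s - 2).
  have [?|?] := leqP a (2 * s + 2); first by fixed_pair.
  have [?|?] := leqP a (3 * s); first by pair_in_progression 2 (3 * s + 1 - a).
  have [?|?] := leqP a (4 * s); first by pair_in_progression 1 (4 * s + 1 - a).
  have [?|?] := leqP a (4 * s + 1); first by fixed_pair.
  have [?|?] := leqP a (6 * s + 1); first by pair_in_progression 0 (a - 4 * s - 1).
  have [?|?] := leqP a (6 * s + 2); first by fixed_pair.
  by pair_in_progression 0 (8 * s + 3 - a).
Qed.

Lemma skolem_seq_exists n : n %% 4 = 0 \/ n %% 4 = 1 -> exists P, skolem_seq n P.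
Proof.
move=> n_mod4.
have [|[s s2 [->|->]]] :
    n \in [:: 0; 1; 4; 5] \/ exists2 s, 2 <= s & n = 4 * s \/ n = 4 * s + 1.
- have [?|?] := ltnP n 8; [left; rewrite !inE | right; exists (n %/ 4)]; lia.
- rewrite !inE => /or4P[] /eqP->.
  + by exists [::].
  + by exists [:: (1, 2)].
  + by exists [:: (1, 2); (4, 6); (5, 8); (3, 7)].
  + by exists [:: (1, 6); (2, 4); (3, 7); (5, 8); (9, 10)].
- by exists (skolem_pairs0 s); apply: skolem_seq_pairs0.
- by exists (skolem_pairs1 s); apply: skolem_seq_pairs1.
Qed.

Lemma skolem_triples_of_seq n P :
  skolem_seq n P -> skolem_triples n [seq (x.2 - x.1, n + x.1) | x <- P].
Proof.
case=> diffsP pointsP.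
have lt12 x : x \in P -> x.1 < x.2.
  move=> xP; have : x.2 - x.1 \in iota 1 n by rewrite -(perm_mem diffsP); apply: map_f.
  rewrite mem_iota; lia.
rewrite /skolem_triples -map_comp.
have -> : iota 1 (3 * n) = iota 1 n ++ [seq n + a | a <- iota 1 (2 * n)].
  by rewrite -iotaDl addnC -iotaD; congr iota; lia.
apply: perm_trans (perm_cat diffsP (perm_map _ pointsP)).
elim: P lt12 {diffsP pointsP} => //= x P IH lt12.
have -> : x.2 - x.1 + (n + x.1) = n + x.2 by have := lt12 x (mem_head _ _); lia.
rewrite perm_cons /=.
rewrite perm_sym (perm_catCA _ [:: n + x.1; n + x.2]) /= !perm_cons perm_sym.
by rewrite IH // => y yP; apply: lt12; rewrite inE yP orbT.
Qed.

Section Translates.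
Variable p : nat.
Local Notation Z := 'Z_p.
Local Open Scope ring_scope.
Implicit Types (B : {set Z}) (d t s x y : Z).

Lemma mem_translate t x B : (x \in translate t B) = (x - t \in B).
Proof.
apply/imsetP/idP => [[y yB ->]|xB]; first by rewrite addrK.
by exists (x - t) => //; rewrite subrK.
Qed.

Lemma mem_translateD t x B : (x + t \in translate t B) = (x \in B).
Proof. by rewrite mem_translate addrK. Qed.

Lemma translateD a b B : translate a (translate b B) = translate (b + a) B.
Proof. by apply/setP=> x; rewrite !mem_translate opprD addrA addrAC. Qed.

Lemma translate0 B : translate 0 B = B.
Proof. by apply/setP=> x; rewrite mem_translate subr0. Qed.

Lemma translate_inj t : injective (translate t).
Proof.
by apply: (can_inj (g := translate (- t))) => B; rewrite translateD subrr translate0.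
Qed.

Lemma card_translate t B : #|translate t B| = #|B|.
Proof. by apply: card_imset; apply: addIr. Qed.

Lemma orbitZ_translate t B : orbitZ (translate t B) = orbitZ B.
Proof.
apply/setP=> S; apply/imsetP/imsetP => [[k _ ->]|[k _ ->]].
  by exists (t + k) => //; rewrite translateD.
by exists (k - t) => //; rewrite translateD addrC subrK.
Qed.

Lemma mem_orbitZ B : B \in orbitZ B.
Proof. by apply/imsetP; exists 0 => //; rewrite translate0. Qed.

Definition opp_set B : {set Z} := [set - x | x in B].

Lemma mem_opp_set x B : (x \in opp_set B) = (- x \in B).
Proof.
apply/imsetP/idP => [[y yB ->]|xB]; first by rewrite opprK.
by exists (- x); rewrite ?opprK.
Qed.

Lemma card_opp_set B : #|opp_set B| = #|B|.
Proof. by apply: card_imset; apply: oppr_inj. Qed.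

Definition diff_count B d : nat := #|[set u in B | u + d \in B]|.

Lemma diff_count_translate t B d : diff_count (translate t B) d = diff_count B d.
Proof.
rewrite /diff_count -[RHS](card_translate t); apply: eq_card => u.
by rewrite mem_translate !inE !mem_translate addrAC.
Qed.

Lemma diff_count_opp_set B d : diff_count (opp_set B) d = diff_count B d.
Proof.
rewrite /diff_count -[RHS]card_opp_set -[RHS](card_translate (- d)).
apply: eq_card => u; rewrite mem_translate !inE !mem_opp_set opprK inE.
by rewrite opprD addrNK andbC.
Qed.

Lemma card_translates_cover x y B :
  #|[set t | (x \in translate t B) && (y \in translate t B)]| = diff_count B (y - x).
Proof.
rewrite /diff_count -[RHS](card_preimset _ (subrI x)); apply: eq_card => t.
by rewrite !inE !mem_translate [x - t + _]addrC addrA subrK.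
Qed.

Lemma diff_count_gt0 x y B : x \in B -> y \in B -> (0 < diff_count B (y - x)%R)%N.
Proof. by move=> xB yB; apply/card_gt0P; exists x; rewrite inE xB subrKC. Qed.

Lemma diff_count_seq (s : seq Z) d :
  uniq s -> diff_count [set x in s] d = count (pred1 d) [seq y - x | x <- s, y <- s].
Proof.
move=> s_uniq; rewrite count_flatten -map_comp.
transitivity (count (fun x => x + d \in s) s).
  rewrite /diff_count -size_filter.
  have /card_uniqP <- := filter_uniq (fun x => x + d \in s) s_uniq.
  by apply: eq_card => u; rewrite !inE mem_filter andbC.
rewrite -sumn_count; congr sumn; apply: eq_map => x /=.
rewrite count_map -count_uniq_mem //; apply: eq_count => y /=.
by rewrite subr_eq addrC.
Qed.

Lemma count_diffs_triple (a b d : Z) : d != 0 ->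
  count (pred1 d) [seq y - x | x <- [:: 0; a; a + b], y <- [:: 0; a; a + b]] =
  count (pred1 d) [:: a; - a; b; - b; a + b; - (a + b)].
Proof.
move=> d0; have zero_ne_d : (0 == d) = false by rewrite eq_sym (negbTE d0).
rewrite /= !subr0 !sub0r !subrr zero_ne_d.
have -> : a + b - a = b by ring.
have -> : a - (a + b) = - b by ring.
by move: (a == d) (- a == d) (b == d) (- b == d) (a + b == d) (- (a + b) == d); lia.
Qed.

Lemma translate_cover_unique x y B t s : (diff_count B (y - x)%R <= 1)%N ->
  x \in translate t B -> y \in translate t B ->
  x \in translate s B -> y \in translate s B -> t = s.
Proof.
rewrite -card_translates_cover => /card_le1_eqP le1 xt yt xs ys.
by apply: le1; rewrite inE ?xt ?yt ?xs ?ys.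
Qed.

Definition sidon B := forall d, d != 0 -> (diff_count B d <= 1)%N.

Lemma sidon_opp_set B : sidon B -> sidon (opp_set B).
Proof. by move=> sB d /sB; rewrite diff_count_opp_set. Qed.

Lemma sidon_translate_inj B t s :
  sidon B -> (1 < #|B|)%N -> translate t B = translate s B -> t = s.
Proof.
move=> sB /card_gt1P[x [y [xB yB xy]]] ts.
apply: (@translate_cover_unique (x + t) (y + t) B); rewrite -?ts ?mem_translateD //.
have -> : y + t - (x + t) = y - x by ring.
by apply: sB; rewrite subr_eq0 eq_sym.
Qed.

(* If [B + t = s - B], then [s = a + b + t] for any two distinct [a, b] in [B]. *)
Lemma sidon_translate_opp B t s :
  sidon B -> (2 < #|B|)%N -> translate t B != translate s (opp_set B).
Proof.
move=> sB /card_gt2P[x [y [z [[xB yB zB] [xy yz zx]]]]]; apply/eqP => ts.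
have centre a b : a \in B -> b \in B -> a != b -> s = a + b + t.
  move=> aB bB ab.
  apply: (@translate_cover_unique (a + t) (b + t) (opp_set B)).
  - have -> : b + t - (a + t) = b - a by ring.
    by apply: sidon_opp_set; rewrite // subr_eq0 eq_sym.
  - by rewrite -ts mem_translateD.
  - by rewrite -ts mem_translateD.
  - by rewrite mem_translate mem_opp_set (_ : - _ = b) //; ring.
  - by rewrite mem_translate mem_opp_set (_ : - _ = a) //; ring.
have := centre x y xB yB xy; rewrite (centre x z xB zB); last by rewrite eq_sym.
by move=> /addIr /addrI zy; rewrite zy eqxx in yz.
Qed.
End Translates.

Section Development.
Variables (p : nat) (I : finType) (F : I -> {set 'Z_p}) (w : I -> nat).
Local Notation Z := 'Z_p.
Local Open Scope ring_scope.

Definition develop (B : {set Z}) : nat :=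
  (\sum_i w i * #|[set t | translate t (F i) == B]|)%N.

Lemma develop_translate1 B : develop (translate 1 B) = develop B.
Proof.
apply: eq_bigr => i _; congr (_ * _)%N.
rewrite -[RHS](card_preimset _ (addIr (- 1))); apply: eq_card => t.
by rewrite !inE -[RHS](inj_eq (@translate_inj _ 1)) translateD subrK.
Qed.

Lemma develop_gt0 B : (0 < develop B)%N -> exists i t, B = translate t (F i).
Proof.
rewrite lt0n sum_nat_eq0 => /forallPn[i /=]; rewrite muln_eq0 negb_or -!lt0n.
by case/andP=> _ /card_gt0P [t]; rewrite inE => /eqP <-; exists i, t.
Qed.

Lemma develop_pair (x y : Z) :
  (\sum_(B : {set Z} | (x \in B) && (y \in B)) develop B =
   \sum_i w i * diff_count (F i) (y - x)%R)%N.
Proof.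
rewrite exchange_big; apply: eq_bigr => i _; rewrite -big_distrr /=; congr (_ * _)%N.
rewrite -card_translates_cover -sum1dep_card.
rewrite (partition_big (fun t => translate t (F i))
                      (fun B => (x \in B) && (y \in B))) //.
apply: eq_bigr => B xyB; rewrite -sum1dep_card; apply: eq_bigl => t.
by case: eqP => [->|]; rewrite ?xyB ?andbF.
Qed.

Lemma isCTS_develop (lam : nat) : (forall i, #|F i| = 3) ->
  (forall d : Z, d != 0 -> (\sum_i w i * diff_count (F i) d)%N = lam) ->
  isCTS lam develop.
Proof.
move=> card3 diffs; split.
- by move=> B /develop_gt0[i [t ->]]; rewrite card_translate.
- exact: develop_translate1.
- by move=> x y xy; rewrite develop_pair diffs // subr_eq0 eq_sym.
Qed.

Hypothesis translates_inj : injective (fun it : I * Z => translate it.2 (F it.1)).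

Lemma eq_translates i i' t s :
  (translate t (F i) == translate s (F i')) = (i == i') && (t == s).
Proof. exact: (inj_eq translates_inj (i, t) (i', s)). Qed.

Lemma develop_translate i t : develop (translate t (F i)) = w i.
Proof.
rewrite /develop (bigD1 i) //= big1 => [|i' i'i].
  have -> : [set s | translate s (F i) == translate t (F i)] = [set t].
    by apply/setP => s; rewrite !inE eq_translates eqxx.
  by rewrite cards1 muln1 addn0.
have -> : [set s | translate s (F i') == translate t (F i)] = set0.
  by apply/setP => s; rewrite !inE eq_translates (negbTE i'i).
by rewrite cards0 muln0.
Qed.

Lemma fine_c_develop c : (0 < c)%N -> fine_c develop c = #|[set i | w i == c]|.
Proof.
move=> c_gt0; rewrite /fine_c.
have -> : [set orbitZ B | B in [set B | develop B == c]] =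
          [set orbitZ (F i) | i in [set i | w i == c]].
  apply/setP => O; apply/imsetP/imsetP => [[B] | [i]].
  - rewrite inE => /eqP devB ->.
    have [i [t BE]] := develop_gt0 (ltac:(by rewrite devB) : (0 < develop B)%N).
    exists i; last by rewrite BE orbitZ_translate.
    by rewrite inE -devB BE develop_translate.
  - rewrite inE => /eqP wi ->; exists (F i) => //.
    by rewrite inE -{1}(translate0 (F i)) develop_translate wi.
apply: card_in_imset => i i' _ _ eqO.
have /imsetP[t _ /eqP] : F i \in orbitZ (F i') by rewrite -eqO mem_orbitZ.
by rewrite -{1}(translate0 (F i)) eq_translates => /andP[/eqP].
Qed.
End Development.

Lemma sum_ord_range (n a b : nat) :
  (\sum_(k < n) (a <= k < b) = minn b n - minn a n)%N.
Proof.
elim: n => [|n IH]; first by rewrite big_ord0; lia.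
by rewrite big_ord_recr /= IH; case: (leqP a n); case: (ltnP n b) => /=; lia.
Qed.

Section SymmetricDevelopment.
Variables (p n : nat) (base : 'I_n -> {set 'Z_p}).
Local Notation Z := 'Z_p.
Local Open Scope ring_scope.

Definition diff_family : Prop :=
  forall d : Z, d != 0 -> (\sum_k diff_count (base k) d)%N = 1%N.

Hypotheses (base_diff : diff_family) (card_base : forall k, #|base k| = 3).

Lemma diff_family_sidon k : sidon (base k).
Proof. by move=> d /base_diff <-; rewrite (bigD1 k) //= leq_addr. Qed.

Lemma diff_family_uniq k k' d : d != 0 ->
  (0 < diff_count (base k) d)%N -> (0 < diff_count (base k') d)%N -> k = k'.
Proof.
move=> /base_diff sum1 pos pos'; apply/eqP; apply: contraT => kk'.
by move: sum1; rewrite (bigD1 k) // (bigD1 k') /=; [lia | rewrite eq_sym].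
Qed.

Definition sym_family (kb : 'I_n * bool) : {set Z} :=
  if kb.2 then opp_set (base kb.1) else base kb.1.

Lemma card_sym_family kb : #|sym_family kb| = 3.
Proof. by rewrite /sym_family; case: kb.2; rewrite ?card_opp_set. Qed.

Lemma diff_count_sym_family kb d :
  diff_count (sym_family kb) d = diff_count (base kb.1) d.
Proof. by rewrite /sym_family; case: kb.2; rewrite ?diff_count_opp_set. Qed.

Lemma sidon_sym_family kb : sidon (sym_family kb).
Proof. by move=> d d0; rewrite diff_count_sym_family diff_family_sidon. Qed.

Lemma sym_family_translates_inj :
  injective (fun it : ('I_n * bool) * Z => translate it.2 (sym_family it.1)).
Proof.
move=> [[k b] t] [[k' b'] s] /= eqT.
have kk' : k = k'.
  have /card_gt1P[x [y [xB yB xy]]] : (1 < #|base k|)%N by rewrite card_base.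
  apply: (@diff_family_uniq _ _ (y - x)); first by rewrite subr_eq0 eq_sym.
    exact: diff_count_gt0.
  rewrite -(diff_count_sym_family (k', b')) -(diff_count_translate s) -eqT.
  by rewrite diff_count_translate diff_count_sym_family diff_count_gt0.
have c3 : (2 < #|base k|)%N by rewrite card_base.
subst k'; have bb' : b = b'.
  move: eqT; rewrite /sym_family /=.
  have := @sidon_translate_opp _ (base k) t s (diff_family_sidon k) c3.
  have := @sidon_translate_opp _ (base k) s t (diff_family_sidon k) c3.
  by case: b b' => [] [] // + + eqT; rewrite eqT eqxx.
subst b'; congr (_, _).
apply: (sidon_translate_inj (sidon_sym_family (k, b))) => //.
by rewrite card_sym_family.
Qed.

Definition sym_weight (weight : 'I_n -> nat) (kb : 'I_n * bool) : nat :=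
  if kb.2 then (4 - weight kb.1)%N else weight kb.1.

Lemma isCTS_sym_develop weight : (forall k, weight k <= 4)%N ->
  isCTS 4 (develop sym_family (sym_weight weight)).
Proof.
move=> weight_le4; apply: isCTS_develop => [kb | d d0]; first exact: card_sym_family.
rewrite -(pair_bigA _ (fun k b =>
  sym_weight weight (k, b) * diff_count (sym_family (k, b)) d))%N /=.
under eq_bigr => k _ do
  rewrite big_bool /= !diff_count_sym_family -mulnDl subnK ?weight_le4 //.
by rewrite -big_distrr base_diff.
Qed.

Lemma fine_c_sym_develop weight c : (0 < c)%N ->
  fine_c (develop sym_family (sym_weight weight)) c =
  (\sum_k ((weight k == c) + (4 - weight k == c)%N))%N.
Proof.
move=> c_gt0; rewrite fine_c_develop //; last exact: sym_family_translates_inj.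
rewrite -sum1dep_card big_mkcond /=.
rewrite -(pair_bigA _ (fun k b => if sym_weight weight (k, b) == c then 1 else 0))%N /=.
by apply: eq_bigr => k _; rewrite big_bool /=; do 2 case: (_ == c).
Qed.

Lemma cts4_fine_structure i j : (j <= i <= n)%N ->
  exists m : {set Z} -> nat, [/\ isCTS 4 m, fine_c m 2 = (2 * n - 2 * i)%N,
    fine_c m 3 = (i - j)%N & fine_c m 4 = j].
Proof.
move=> /andP[ji i_le_n].
pose weight (k : 'I_n) := (2 + (k < i) + (k < j))%N.
exists (develop sym_family (sym_weight weight)); split.
- by apply: isCTS_sym_develop => k; rewrite /weight; lia.
- rewrite fine_c_sym_develop //; transitivity (\sum_(k < n) 2 * (i <= k < n))%N.
    by apply: eq_bigr => k _; rewrite /weight ltn_ord; lia.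
  by rewrite -big_distrr /= sum_ord_range; lia.
- rewrite fine_c_sym_develop //; transitivity (\sum_(k < n) (j <= k < i))%N.
    by apply: eq_bigr => k _; rewrite /weight; lia.
  by rewrite sum_ord_range; lia.
- rewrite fine_c_sym_develop //; transitivity (\sum_(k < n) (0 <= k < j))%N.
    by apply: eq_bigr => k _; rewrite /weight; lia.
  by rewrite sum_ord_range; lia.
Qed.
End SymmetricDevelopment.

Section SignedResidues.
Variable p : nat.
Local Open Scope ring_scope.

Lemma natZp_eq (a b : nat) : (1 < p)%N -> (a < p)%N -> (b < p)%N ->
  (a%:R == b%:R :> 'Z_p) = (a == b).
Proof.
by move=> p_gt1 ap bp; rewrite -(inj_eq val_inj) /= !val_Zp_nat // !modn_small.
Qed.

Lemma oppr_natZp (e : nat) : (1 < p)%N -> (e <= p)%N -> - (e%:R : 'Z_p) = (p - e)%:R.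
Proof.
move=> p_gt1 ep; apply/eqP; rewrite eq_sym -subr_eq0 opprK -natrD subnK //.
by rewrite -(inj_eq val_inj) /= val_Zp_nat // modnn.
Qed.

Definition signed_residues (s : seq nat) : seq 'Z_p :=
  flatten [seq [:: e%:R; - e%:R] | e <- s].

Lemma count_signed_residues (s : seq nat) (d : 'Z_p) :
  count (pred1 d) (signed_residues s) =
  (\sum_(e <- s) count (pred1 d) [:: e%:R; - e%:R])%N.
Proof. by rewrite count_flatten -map_comp sumnE big_map. Qed.

Lemma count_signed_residues_iota (N : nat) (d : 'Z_p) : (0 < N)%N -> p = (2 * N).+1 ->
  d != 0 -> count (pred1 d) (signed_residues (iota 1 N)) = 1%N.
Proof.
move=> N_gt0 pE d0; have p_gt1 : (1 < p)%N by lia.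
have d_lt_p : (d < p)%N by rewrite -[p in (_ < p)%N](Zp_cast p_gt1) ltn_ord.
have d_gt0 : (0 < d)%N by rewrite lt0n; apply: contraNneq d0 => vd0; apply/eqP/val_inj.
have sum_eq c : (\sum_(e <- iota 1 N) (e == c) = (c \in iota 1 N))%N.
  by rewrite -count_uniq_mem ?iota_uniq // -sum1_count [RHS]big_mkcond.
rewrite count_signed_residues big_seq.
rewrite (eq_bigr (fun e => (e == val d) + (e == p - d))%N) -?big_seq => [|e].
  by rewrite big_split /= !sum_eq !mem_iota; lia.
rewrite mem_iota => e_range; rewrite (oppr_natZp p_gt1); last lia.
by rewrite -[d in pred1 d]natr_Zp /= !natZp_eq //; lia.
Qed.
End SignedResidues.

Section SkolemDifferenceFamily.
Variables (n : nat) (T : seq (nat * nat)).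
Hypotheses (n_gt0 : (0 < n)%N) (T_skolem : skolem_triples n T).
Local Notation p := (6 * n).+1.
Local Notation Z := 'Z_p.
Local Open Scope ring_scope.

Lemma size_skolem_triples : size T = n.
Proof.
have : size (flatten [seq [:: x.1; x.2; (x.1 + x.2)%N] | x <- T]) = (3 * size T)%N.
  by elim: (T) => //= x s ->; lia.
by rewrite (perm_size T_skolem) size_iota; lia.
Qed.

Lemma skolem_triple_range x : x \in T ->
  [/\ (0 < x.1)%N, (0 < x.2)%N & (x.1 + x.2 <= 3 * n)%N].
Proof.
move=> xT; have range e : e \in [:: x.1; x.2; (x.1 + x.2)%N] -> (0 < e <= 3 * n)%N.
  move=> ex; have : e \in iota 1 (3 * n).
    by rewrite -(perm_mem T_skolem); apply/flatten_mapP; exists x.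
  by rewrite mem_iota; lia.
have := range x.1; have := range x.2; have := range (x.1 + x.2)%N.
by rewrite !inE !eqxx !orbT => /(_ isT) ? /(_ isT) ? /(_ isT) ?; split; lia.
Qed.

Definition skolem_triple (k : 'I_n) : seq nat :=
  let x := nth (0, 0)%N T k in [:: x.1; x.2; (x.1 + x.2)%N].

Definition skolem_base (k : 'I_n) : seq Z :=
  let x := nth (0, 0)%N T k in [:: 0; x.1%:R; (x.1 + x.2)%N%:R].

Definition skolem_block (k : 'I_n) : {set Z} := [set u in skolem_base k].

Lemma skolem_base_uniq k : uniq (skolem_base k).
Proof.
have kT : (k < size T)%N by rewrite size_skolem_triples.
rewrite /skolem_base; have := skolem_triple_range (mem_nth (0, 0)%N kT).
move: (nth _ T k) => [a b] /= [a_gt0 b_gt0 ab_le].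
rewrite !inE (_ : (0 : Z) = 0%N%:R) // !natZp_eq //; lia.
Qed.

Lemma card_skolem_block k : #|skolem_block k| = 3%N.
Proof. by rewrite cardsE; have /card_uniqP -> := skolem_base_uniq k. Qed.

Lemma diff_count_skolem_block k d : d != 0 ->
  diff_count (skolem_block k) d = count (pred1 d) (signed_residues p (skolem_triple k)).
Proof.
move=> d0; rewrite diff_count_seq ?skolem_base_uniq // /skolem_base natrD.
by rewrite count_diffs_triple // /signed_residues /= natrD.
Qed.

Lemma skolem_diff_family : diff_family skolem_block.
Proof.
move=> d d0; transitivity (count (pred1 d) (signed_residues p (iota 1 (3 * n)))).
  2: by apply: count_signed_residues_iota => //; lia.
rewrite count_signed_residues -(perm_big _ T_skolem) big_flatten big_map.
rewrite (big_nth (0, 0)%N) size_skolem_triples big_mkord; apply: eq_bigr => k _.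
by rewrite diff_count_skolem_block // count_signed_residues.
Qed.
End SkolemDifferenceFamily.

Theorem mainTheorem13 (v : nat) :
  (v %% 24 = 1 \/ v %% 24 = 7)%N -> (7 <= v)%N ->
  forall i j : nat, (j <= v.-1 %/ 6)%N -> (j <= i <= v.-1 %/ 6)%N ->
  exists m : {set 'Z_v} -> nat,
    isCTS 4 m /\
    fine_c m 2 = (2 * (v.-1 %/ 6) - 2 * i)%N /\
    fine_c m 3 = (i - j)%N /\
    fine_c m 4 = j.
Proof.
move=> v_mod24 v_ge7 i j _ ji_n.
have [n [vE n_mod4 n_gt0]] :
    exists n, [/\ v = (6 * n).+1, n %% 4 = 0 \/ n %% 4 = 1 & 0 < n]%N.
  by exists (v.-1 %/ 6); split; lia.
subst v.
rewrite (_ : (6 * n).+1.-1 %/ 6 = n)%N in ji_n *; last lia.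
have [P /skolem_triples_of_seq T_skolem] := skolem_seq_exists n_mod4.
have [m [cts c2 c3 c4]] := cts4_fine_structure (skolem_diff_family n_gt0 T_skolem)
  (card_skolem_block n_gt0 T_skolem) ji_n.
by exists m.
Qed.
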